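(* Let $p$ be a prime, $n \in \mathbb{N}$, and let $v \in \mathbb{Z}_p^n$ with $|v| \ge 2^{18} \log p$. There exists $Y \subset [n]$ with $n/4 \le |Y| \le n/2$ such that $$|v_Y| \ge \frac{|v|}{4} \qquad \text{and} \qquad T_\ell(v_Y) \subset T_{8\ell}(v),$$ where $\ell := 2^{-16} |v|$.
   Context: $\log$ is the natural logarithm. For $w \in \mathbb{Z}_p^m$, $|w|$ is the number of nonzero coordinates of $w$, and for $t \ge 0$ $$T_t(w) := \Big\{ k \in \mathbb{Z}_p : \sum_{i=1}^m \Big\| \frac{k \cdot w_i}{p} \Big\|^2 \le t \Big\},$$ where $k \cdot w_i \in \mathbb{Z}$ is the product of the representatives of $k$ and $w_i$ in $\{0,\ldots,p-1\}$, and $\|x\|$ is the distance from $x$ to the nearest integer. For $Y \subset [n]$, $v_Y \in \mathbb{Z}_p^{|Y|}$ is the restriction of $v$ to the coordinates in $Y$ (so $T_\ell(v_Y)$ sums only over $i \in Y$). *)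

From HB Require Import structures.
From mathcomp Require Import all_boot all_order all_algebra.
From mathcomp Require Import all_classical all_reals all_analysis.
Set Implicit Arguments. Unset Strict Implicit. Unset Printing Implicit Defensive.
Import Order.TTheory GRing.Theory Num.Theory.
Local Open Scope ring_scope.

Definition distZ (R : realType) (x : R) : R :=
  Num.min (x - (Num.floor x)%:~R) ((Num.ceil x)%:~R - x).

(* |v_Y| : number of nonzero coordinates of v restricted to Y *)
Definition supp_size (p n : nat) (v : {ffun 'I_n -> 'Z_p}) (Y : {set 'I_n}) : nat :=
  #|[set i in Y | v i != 0]|.

(* T_t(v_Y) = { k in Z_p : sum_{i in Y} || k * v_i / p ||^2 <= t },
   with k * v_i the product of the representatives in {0,...,p-1} (as nat). *)
Definition Tset (R : realType) (p n : nat) (v : {ffun 'I_n -> 'Z_p})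
    (Y : {set 'I_n}) (t : R) : {set 'Z_p} :=
  [set k : 'Z_p | \sum_(i in Y) (distZ (((k : nat) * (v i : nat))%N%:R / p%:R)) ^+ 2 <= t].

From HB Require Import structures.
From mathcomp Require Import all_boot all_order all_algebra.
From mathcomp Require Import all_classical all_reals all_analysis.
From mathcomp Require Import lra zify.
Set Implicit Arguments. Unset Strict Implicit. Unset Printing Implicit Defensive.
Import Order.TTheory GRing.Theory Num.Theory.
Local Open Scope ring_scope.

(* Pair the coordinates as (2j, 2j+1) and keep one coordinate of each pair: every
   choice c : 'I_(n/2) -> bool gives a set Y_c of size n/2.  For one pair, the
   average of exp(-a/4) and exp(-b/4) is at most exp(-3(a+b)/64), so averaging
   exp(-(sum over Y_c)/4) over all choices is a Chernoff bound.  It makes the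
   exponential weights of the p + 1 bad events (the support of v_Y is too small,
   or some k outside T_{8ℓ}(v) lands in T_ℓ(v_Y)) sum to less than the number
   2^(n/2) of choices, so for some choice all weights are below 1 and no bad
   event occurs. *)

Lemma sum_option (V : nmodType) (T : finType) (F : option T -> V) :
  \sum_(a : option T) F a = F None + \sum_(t : T) F (Some t).
Proof.
rewrite (bigD1 None) //=; congr (_ + _).
rewrite (reindex_omap Some id) => [|[]//].
by apply: eq_bigl => t; rewrite eqxx.
Qed.

Lemma sum_ord_pairs (V : nmodType) (x : nat -> V) (m : nat) :
  \sum_(i < 2 * m) x i = \sum_(j < m) (x (2 * j)%N + x (2 * j).+1).
Proof.
elim: m => [|m IHm]; first by rewrite !big_ord0.
rewrite [RHS]big_ord_recr /= -IHm.
have -> : (2 * m.+1 = (2 * m).+2)%N by rewrite mulnS addnC addn2.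
by rewrite !big_ord_recr /= addrA.
Qed.

Lemma exists_all_weights_lt1 (R : realDomainType) (A C : finType)
    (w : A -> C -> R) :
  (forall a c, 0 <= w a c) -> \sum_a \sum_c w a c < #|C|%:R ->
  exists c, forall a, w a c < 1.
Proof.
move=> w_ge0; apply: contraPP => /forallNP no_good.
apply/negP; rewrite -leNgt exchange_big -sumr_const; apply: ler_sum => c _.
have [a /negP] := (existsNP _).2 (no_good c); rewrite -leNgt => w_ge1.
by apply: le_trans w_ge1 _; rewrite (bigD1 a) //= lerDl sumr_ge0.
Qed.

Lemma distZ_bound (R : realType) (x : R) : 0 <= distZ x <= 1 / 2.
Proof.
rewrite /distZ; set a := x - _; set b := _ - x.
have a_ge0 : 0 <= a by rewrite subr_ge0 floor_le.
have b_ge0 : 0 <= b by rewrite subr_ge0 ceil_ge.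
have ab_le1 : a + b <= 1.
  rewrite /a /b ceil_floor addrC addrA subrK rmorphD /= addrC addKr.
  by case: (x \isn't a Num.int).
rewrite le_min a_ge0 b_ge0 ge_min /=.
by have [ab|ba] := leP a b; apply/orP; [left|right]; lra.
Qed.

Section ExpBounds.
Variable R : realType.

Lemma expRN_le_quadratic (y : R) : 0 <= y -> expR (- y) <= 1 - y + y ^+ 2.
Proof.
move=> y_ge0; have e_gt0 : 0 < expR (- y) := expR_gt0 _.
have : expR (- y) * (1 + y) <= expR (- y) * expR y.
  by rewrite ler_wpM2l ?expR_ge1Dx // ltW.
rewrite [X in _ <= X]mulrC expRxMexpNx_1.
nra.
Qed.

Lemma expRN_mul_le (t a : R) : 0 <= t <= 1 -> 0 <= a <= 1 ->
  expR (- (t * a)) <= 1 - (t - t ^+ 2) * a.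
Proof.
move=> /andP[t_ge0 t_le1] /andP[a_ge0 a_le1].
have := expRN_le_quadratic (mulr_ge0 t_ge0 a_ge0).
have : t ^+ 2 * a ^+ 2 <= t ^+ 2 * a by rewrite ler_wpM2l ?sqr_ge0 // expr2 ler_piMl.
rewrite exprMn; lra.
Qed.

Lemma expRN_pair_le (t a b : R) : 0 <= t <= 1 -> 0 <= a <= 1 -> 0 <= b <= 1 ->
  expR (- (t * a)) + expR (- (t * b)) <= 2 * expR (- ((t - t ^+ 2) / 2 * (a + b))).
Proof.
move=> t01 a01 b01.
have := expR_ge1Dx (- ((t - t ^+ 2) / 2 * (a + b))).
have := expRN_mul_le t01 a01; have := expRN_mul_le t01 b01.
lra.
Qed.

Lemma ln_ge_half (x : R) : 2 <= x -> 1 / 2 <= ln x.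
Proof.
move=> x_ge2; have x_gt0 : 0 < x by lra.
have := expR_ge1Dx (- ln x); rewrite expRN lnK ?posrE //.
have : x^-1 <= 1 / 2 by rewrite -div1r ler_pdivrMr //; lra.
lra.
Qed.

Lemma succ_mul_expR_lt1 (x : R) : 2 <= x -> (x + 1) * expR (3 / 32 - 8 * ln x) < 1.
Proof.
move=> x_ge2; have x_gt0 : 0 < x by lra.
have exp_le : expR (3 / 32 - 8 * ln x) <= x ^- 2.
  rewrite -[x in x ^- 2]lnK ?posrE // -expRM_natl -expRN ler_expR.
  by have := ln_ge_half x_ge2; lra.
have ratio_lt1 : (x + 1) / x ^+ 2 < 1 by rewrite ltr_pdivrMr ?exprn_gt0 // mul1r expr2; nra.
by apply: le_lt_trans ratio_lt1; rewrite ler_wpM2l //; lra.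
Qed.

End ExpBounds.

Lemma sum_choice_expR_le (R : realType) (m : nat) (x : nat -> R) (t : R) :
  0 <= t <= 1 -> (forall i, 0 <= x i <= 1) ->
  \sum_(c : {ffun 'I_m -> bool}) expR (- (t * \sum_(j < m) x (2 * j + c j)%N))
    <= 2 ^+ m * expR (- ((t - t ^+ 2) / 2 * \sum_(i < 2 * m) x i)).
Proof.
move=> t01 x01.
have -> : \sum_(c : {ffun 'I_m -> bool}) expR (- (t * \sum_(j < m) x (2 * j + c j)%N))
    = \prod_(j < m) \sum_(b : bool) expR (- (t * x (2 * j + b)%N)).
  rewrite bigA_distr_bigA; apply: eq_bigr => c _.
  by rewrite mulr_sumr -sumrN expR_sum.
rewrite sum_ord_pairs mulr_sumr -sumrN expR_sum -[m in 2 ^+ m]card_ord.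
rewrite -prodr_const -big_split /=; apply: ler_prod => j _.
rewrite sumr_ge0 => [|b _]; last exact: expR_ge0.
by rewrite big_bool /= addn0 addn1 addrC expRN_pair_le.
Qed.

Lemma sum_ord_le_even_part (R : numDomainType) (x : nat -> R) (n : nat) :
  (forall i, x i <= 1) -> \sum_(i < n) x i <= \sum_(i < 2 * (n %/ 2)) x i + 1.
Proof.
move=> x_le1; have [n_even|n_odd] : n = (2 * (n %/ 2))%N \/ n = (2 * (n %/ 2)).+1.
- by lia.
- by rewrite -n_even lerDl ler01.
- by rewrite [in X in X <= _]n_odd big_ord_recr lerD2l.
Qed.

Definition zero_ext (V : nmodType) (n : nat) (h : 'I_n -> V) (i : nat) : V :=
  if insub i is Some j then h j else 0.

Lemma zero_ext_ord (V : nmodType) (n : nat) (h : 'I_n -> V) (j : 'I_n) :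
  zero_ext h j = h j.
Proof. by rewrite /zero_ext valK. Qed.

Lemma sum_zero_ext (V : nmodType) (n : nat) (h : 'I_n -> V) :
  \sum_(i < n) zero_ext h i = \sum_i h i.
Proof. by apply: eq_bigr => i _; rewrite zero_ext_ord. Qed.

Lemma zero_ext_bound (R : numDomainType) (n : nat) (h : 'I_n -> R) (i : nat) :
  (forall j, 0 <= h j <= 1) -> 0 <= zero_ext h i <= 1.
Proof. by rewrite /zero_ext; case: insub => [j|_] //; rewrite lexx ler01. Qed.

Section PairSelection.
Variable n : nat.

Lemma pair_pick_lt (j : 'I_(n %/ 2)) (b : bool) : (2 * j + b < n)%N.
Proof. by case: j b => j /= j_lt [] /=; lia. Qed.

Definition pair_pick (c : {ffun 'I_(n %/ 2) -> bool}) (j : 'I_(n %/ 2)) : 'I_n :=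
  Ordinal (pair_pick_lt j (c j)).

Definition pair_selection (c : {ffun 'I_(n %/ 2) -> bool}) : {set 'I_n} :=
  [set pair_pick c j | j : 'I_(n %/ 2)].

Lemma pair_pick_inj c : injective (pair_pick c).
Proof.
move=> j1 j2 /(congr1 val) /=.
by case: (c j1) (c j2) => [] [] /= eq; apply: ord_inj; lia.
Qed.

Lemma card_pair_selection c : #|pair_selection c| = (n %/ 2)%N.
Proof. by rewrite card_imset ?card_ord //; apply: pair_pick_inj. Qed.

Lemma sum_pair_selection (V : nmodType) (h : 'I_n -> V) c :
  \sum_(i in pair_selection c) h i = \sum_j h (pair_pick c j).
Proof. by rewrite big_imset //= => j1 j2 _ _; apply: pair_pick_inj. Qed.

Lemma pair_selection_chernoff (R : realType) (h : 'I_n -> R) (t : R) :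
  0 <= t <= 1 -> (forall i, 0 <= h i <= 1) ->
  \sum_c expR (- (t * \sum_(i in pair_selection c) h i))
    <= 2 ^+ (n %/ 2) * expR (- ((t - t ^+ 2) / 2 * (\sum_i h i - 1))).
Proof.
move=> t01 h01; have x01 i := zero_ext_bound i h01.
under eq_bigr => c _ do
  rewrite sum_pair_selection (eq_bigr _ (fun j _ => esym (zero_ext_ord h (pair_pick c j)))).
apply: le_trans (sum_choice_expR_le _ t01 x01) _.
rewrite ler_wpM2l ?exprn_ge0 // ler_expR lerN2 ler_wpM2l //.
- by case/andP: t01 => t_ge0 t_le1; rewrite divr_ge0 // subr_ge0 expr2 ler_piMr.
- by rewrite -sum_zero_ext lerBlDr sum_ord_le_even_part // => i; case/andP: (x01 i).
Qed.

End PairSelection.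

Lemma supp_size_sum (R : pzSemiRingType) (p n : nat) (v : {ffun 'I_n -> 'Z_p})
    (Y : {set 'I_n}) :
  (supp_size v Y)%:R = \sum_(i in Y) ((v i != 0)%:R : R).
Proof.
rewrite /supp_size -sum1_card natr_sum (eq_bigl (fun i => (i \in Y) && (v i != 0))).
  by rewrite big_mkcondr; apply: eq_bigr => i _; case: (v i != 0).
by move=> i; rewrite inE.
Qed.

Section SelectionWeights.
Variables (R : realType) (p n : nat) (v : {ffun 'I_n -> 'Z_p}).
Hypothesis p_prime : prime p.
Local Notation s := (supp_size v [set: 'I_n]).
Hypothesis s_large : 2 ^+ 18 * ln (p%:R : R) <= s%:R.
Local Notation ell := ((s%:R : R) / 2 ^+ 16).

Definition phase_sq (k : 'Z_p) (i : 'I_n) : R :=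
  distZ (((k : nat) * (v i : nat))%N%:R / p%:R) ^+ 2.

Lemma in_Tset (Y : {set 'I_n}) (t : R) k :
  (k \in Tset v Y t) = (\sum_(i in Y) phase_sq k i <= t).
Proof. by rewrite inE. Qed.

Lemma phase_sq_bound k i : 0 <= phase_sq k i <= 1 / 4.
Proof.
have /andP[d_ge0 d_le] := distZ_bound (((k : nat) * (v i : nat))%N%:R / (p%:R : R)).
by rewrite /phase_sq exprn_ge0 //= expr2; nra.
Qed.

(* [None] stands for the support of [v_Y], [Some k] for the frequency [k]; a weight
   below 1 certifies that the corresponding bad event does not occur. *)
Definition selection_weight (a : option 'Z_p) (c : {ffun 'I_(n %/ 2) -> bool}) : R :=
  if a is Some k then
    if k \in Tset v [set: 'I_n] (8 * ell) then 0
    else expR (ell - \sum_(i in pair_selection c) phase_sq k i)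
  else expR (s%:R / 16 - (supp_size v (pair_selection c))%:R / 4).

Lemma selection_weight_ge0 a c : 0 <= selection_weight a c.
Proof. by case: a => [k|] /=; [case: ifP|] => *; rewrite ?expR_ge0. Qed.

Lemma ln_p_ge_half : 1 / 2 <= ln (p%:R : R).
Proof. by apply: ln_ge_half; rewrite ler_nat prime_gt1. Qed.

Let quarter_01 : (0 : R) <= 1 / 4 <= (1 : R).
Proof. by apply/andP; split; lra. Qed.

Lemma sum_support_weight_le :
  \sum_c selection_weight None c <= 2 ^+ (n %/ 2) * expR (3 / 32 - 8 * ln (p%:R : R)).
Proof.
pose g i : R := (v i != 0)%:R.
have g01 i : 0 <= g i <= 1 by rewrite /g; case: (v i != 0); rewrite /= ?lexx ?ler01.
have weightE c : selection_weight None c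
    = expR (s%:R / 16) * expR (- (1 / 4 * \sum_(i in pair_selection c) g i)).
  by rewrite /= -expRD [X in _ - X / 4]supp_size_sum /g; congr expR; lra.
have s_sum : s%:R = \sum_i g i.
  by rewrite supp_size_sum; apply: eq_bigl => i; rewrite inE.
rewrite (eq_bigr _ (fun c _ => weightE c)) -mulr_sumr.
apply: le_trans (ler_wpM2l (expR_ge0 _) (pair_selection_chernoff quarter_01 g01)) _.
rewrite mulrCA -expRD ler_wpM2l ?exprn_ge0 // ler_expR -s_sum.
by have := ln_p_ge_half; have := s_large; lra.
Qed.

Lemma sum_phase_weight_le k :
  \sum_c selection_weight (Some k) c <= 2 ^+ (n %/ 2) * expR (3 / 32 - 8 * ln (p%:R : R)).
Proof.
have [small|] := boolP (k \in Tset v [set: 'I_n] (8 * ell)).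
  by rewrite big1 ?mulr_ge0 ?exprn_ge0 ?expR_ge0 // => c _; rewrite /= small.
rewrite in_Tset -ltNge => phase_large.
under eq_bigr => c _ do rewrite /= ifN ?in_Tset -?ltNge //.
have phase01 i : 0 <= 4 * phase_sq k i <= 1 by have := phase_sq_bound k i; lra.
have weightE c : expR (ell - \sum_(i in pair_selection c) phase_sq k i)
    = expR ell * expR (- (1 / 4 * \sum_(i in pair_selection c) 4 * phase_sq k i)).
  by rewrite -mulr_sumr -expRD; congr expR; lra.
rewrite (eq_bigr _ (fun c _ => weightE c)) -mulr_sumr.
apply: le_trans (ler_wpM2l (expR_ge0 _) (pair_selection_chernoff quarter_01 phase01)) _.
rewrite mulrCA -expRD ler_wpM2l ?exprn_ge0 // ler_expR -mulr_sumr.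
have -> : \sum_i phase_sq k i = \sum_(i in [set: 'I_n]) phase_sq k i.
  by apply: eq_bigl => i; rewrite inE.
by have := ln_p_ge_half; have := s_large; lra.
Qed.

Lemma sum_selection_weight_lt :
  \sum_a \sum_c selection_weight a c < #|{ffun 'I_(n %/ 2) -> bool}|%:R.
Proof.
rewrite sum_option card_ffun card_bool card_ord natrX.
apply: le_lt_trans
  (lerD sum_support_weight_le (ler_sum _ (fun k _ => sum_phase_weight_le k))) _.
rewrite sumr_const card_ord Zp_cast ?prime_gt1 // -mulrS -mulrnAr.
rewrite -[X in _ < X]mulr1 ltr_pM2l ?exprn_gt0 // -mulr_natl -addn1 natrD.
by apply: succ_mul_expR_lt1; rewrite ler_nat prime_gt1.
Qed.

Lemma two_le_n : (2 <= n)%N.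
Proof.
apply: (@leq_trans s); last by rewrite -[X in (_ <= X)%N]card_ord max_card.
by rewrite -(ler_nat R); have := ln_p_ge_half; have := s_large; lra.
Qed.

End SelectionWeights.

Theorem lemma3p5 (R : realType) (p n : nat) (v : {ffun 'I_n -> 'Z_p}) :
  prime p ->
  2 ^+ 18 * ln (p%:R : R) <= (supp_size v [set: 'I_n])%:R ->
  let ell : R := (supp_size v [set: 'I_n])%:R / 2 ^+ 16 in
  exists Y : {set 'I_n},
    [/\ n%:R / 4 <= (#|Y|%:R : R), (#|Y|%:R : R) <= n%:R / 2,
        (supp_size v [set: 'I_n])%:R / 4 <= ((supp_size v Y)%:R : R)
      & Tset v Y ell \subset Tset v [set: 'I_n] (8 * ell)].
Proof.
move=> p_prime s_large ell; rewrite {}/ell.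
have n_ge2 := two_le_n p_prime s_large.
have [c good] := exists_all_weights_lt1 (@selection_weight_ge0 R p n v)
  (sum_selection_weight_lt p_prime s_large).
exists (pair_selection c); split.
- by rewrite card_pair_selection ler_pdivrMr // -natrM ler_nat; lia.
- by rewrite card_pair_selection ler_pdivlMr // -natrM ler_nat; lia.
- by have := good None; rewrite /= expR_lt1; lra.
- apply/fintype.subsetP => k; rewrite in_Tset => small; apply/negPn/negP => large.
  by have := good (Some k); rewrite /= (negbTE large) expR_lt1; lra.
Qed.
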